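(* Fix $x,t>0$ and let $\tau_1$ be a minimizer of $\tau\mapsto G(\tau,x,t)$ on $[0,\infty)$. Let $(\bar x,\bar t)\ne(x,t)$ be any point on the line segment joining $(x,t)$ and $(0,\tau_1)$. Then the minimizer of $\tau\mapsto G(\tau,\bar x,\bar t)$ on $[0,\infty)$ is unique and equals $\tau_1$.
   Context: Standing assumptions: $u_b:[0,\infty)\to(0,\infty)$ bounded measurable and positive; $\rho_b:[0,\infty)\to(0,\infty)$ positive locally bounded measurable. For $x,t,\tau\ge0$: $G(\tau,x,t)=\int_0^\tau[x-u_b(\eta)(t-\eta)]\rho_b(\eta)u_b(\eta)\,d\eta$. *)

From HB Require Import structures.
From mathcomp Require Import all_boot all_order all_algebra.
From mathcomp Require Import all_classical all_reals all_analysis.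
Set Implicit Arguments. Unset Strict Implicit. Unset Printing Implicit Defensive.
Import Order.TTheory GRing.Theory Num.Theory.
Import numFieldNormedType.Exports.
Local Open Scope classical_set_scope.
Local Open Scope ring_scope.

Definition G (R : realType) (ub rhob : R -> R) (tau x t : R) : R :=
  Rintegral lebesgue_measure `[0, tau]
    (fun eta => (x - ub eta * (t - eta)) * rhob eta * ub eta).

Definition ub_admissible (R : realType) (ub : R -> R) : Prop :=
  [/\ measurable_fun (`[0, +oo[ : set R) ub,
      (exists M : R, forall eta : R, 0 <= eta -> ub eta <= M) &
      (forall eta : R, 0 <= eta -> 0 < ub eta)].

Definition rhob_admissible (R : realType) (rhob : R -> R) : Prop :=
  [/\ measurable_fun (`[0, +oo[ : set R) rhob,
      (forall T : R, exists M : R, forall eta : R, 0 <= eta <= T -> rhob eta <= M) &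
      (forall eta : R, 0 <= eta -> 0 < rhob eta)].

Definition is_minimizer (R : realType) (ub rhob : R -> R) (x t tau0 : R) : Prop :=
  0 <= tau0 /\ forall tau : R, 0 <= tau -> G ub rhob tau0 x t <= G ub rhob tau x t.

From HB Require Import structures.
From mathcomp Require Import all_boot all_order all_algebra.
From mathcomp Require Import all_classical all_reals all_analysis.
From mathcomp Require Import measurable_realfun ring.
Import Order.TTheory GRing.Theory Num.Theory.
Local Open Scope classical_set_scope.
Local Open Scope ring_scope.

(* For fixed tau, G is affine in (x, t), so along the segment
   G(., xb, tb) = (1 - s) G(., x, t) + s G(., 0, tau1).  The last term is the
   primitive of eta |-> (eta - tau1) rho_b(eta) u_b(eta)^2, negative before
   tau1 and positive after it, so tau1 is its strict global minimizer on
   [0, oo).  Adding (1 - s) times a function that is also minimized at tau1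
   keeps tau1 the unique minimizer as soon as s > 0, i.e. as soon as
   (xb, tb) <> (x, t). *)

Lemma integrableZl_EFin d (T : measurableType d) (R : realType)
    (mu : {measure set T -> \bar R}) (D : set T) (k : R) (f : T -> R) :
  measurable D -> mu.-integrable D (EFin \o f) ->
  mu.-integrable D (EFin \o (fun y => k * f y)).
Proof. by move=> mD intf; exact: eq_integrable (integrableZl mD k intf). Qed.

Section Rintegral_sign.
Context {R : realType}.
Notation mu := (@lebesgue_measure R).
Implicit Types (f : R -> R) (a b : R).

Lemma Rintegral_itv_gt0 f a b : a < b ->
  mu.-integrable `]a, b[ (EFin \o f) ->
  (forall y, a < y < b -> 0 < f y) ->
  0 < \int[mu]_(y in `]a, b[) f y.
Proof.
move=> ab intf fgt0.
have mI : measurable (`]a, b[ : set (measurableTypeR R)) by exact: measurable_itv.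
have fge0 y : y \in `]a, b[ -> 0 <= f y by rewrite in_itv => /fgt0/ltW.
have int_ge0 : 0 <= \int[mu]_(y in `]a, b[) f y.
  by apply: Rintegral_ge0 => y; exact: fge0.
(* Otherwise f would vanish a.e. on ]a, b[, which is not a null set. *)
rewrite lt_neqAle int_ge0 andbT; apply/negP => /eqP/esym int0.
have /integrableP[mf _] := intf.
have : (\int[mu]_(y in `]a, b[) `|(EFin \o f) y| = 0)%E.
  transitivity (\int[mu]_(y in `]a, b[) (EFin \o f) y)%E.
    by apply: eq_integral => y /set_mem/fge0 fy0; rewrite /= ger0_norm.
  by rewrite -(fineK (integrable_fin_num mI intf)) -/(Rintegral _ _ _) int0.
move/(ae_eq_integral_abs _ mI mf) => [N [mN N0 fN]].
have IN : `]a, b[ `<=` N.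
  move=> y Iy; apply: fN => /(_ Iy) [] /eqP.
  by rewrite gt_eqF // fgt0 //; move: Iy; rewrite /= in_itv.
have := subset_measure0 mI mN IN N0.
change (lebesgue_measure (`]a, b[ : set R) = 0%E -> False).
rewrite lebesgue_measure_itv /= lte_fin ab => /eqP.
by rewrite -EFinD eqe subr_eq0 gt_eqF.
Qed.

Lemma Rintegral_itv_lt0 f a b : a < b ->
  mu.-integrable `]a, b[ (EFin \o f) ->
  (forall y, a < y < b -> f y < 0) ->
  \int[mu]_(y in `]a, b[) f y < 0.
Proof.
move=> ab intf flt0.
have mI : measurable (`]a, b[ : set (measurableTypeR R)) by exact: measurable_itv.
rewrite -oppr_gt0 -mulN1r -RintegralZl //.
apply: Rintegral_itv_gt0 => [//||y /flt0]; first exact: integrableZl_EFin.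
by rewrite mulN1r oppr_gt0.
Qed.

Lemma Rintegral_itvB_open f a b c : a <= b -> b <= c ->
  mu.-integrable `[a, c] (EFin \o f) ->
  \int[mu]_(y in `[a, c]) f y - \int[mu]_(y in `[a, b]) f y =
  \int[mu]_(y in `]b, c[) f y.
Proof.
move=> ab bc intf.
rewrite Rintegral_itvB ?bnd_simp // Rintegral_itv_bndo_bndc //.
apply: integrableS intf => //.
by apply: subset_itv; rewrite bnd_simp.
Qed.

Lemma Rintegral_sign_change_argmin f a c : a <= c ->
  (forall b, a <= b -> mu.-integrable `[a, b] (EFin \o f)) ->
  (forall y, a < y < c -> f y < 0) -> (forall y, c < y -> 0 < f y) ->
  forall b, a <= b -> b != c ->
  \int[mu]_(y in `[a, c]) f y < \int[mu]_(y in `[a, b]) f y.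
Proof.
move=> ac intf fneg fpos b ab.
have intf_oo u v : a <= u -> u <= v -> mu.-integrable `]u, v[ (EFin \o f).
  move=> au uv; apply: integrableS (intf v (le_trans au uv)) => //.
  by apply: subset_itv; rewrite bnd_simp.
rewrite neq_lt => /orP[bc|cb].
- rewrite -subr_lt0 Rintegral_itvB_open ?(ltW bc) ?intf //.
  apply: Rintegral_itv_lt0 => [//||y /andP[b_y yc]].
    by apply: intf_oo; rewrite // ltW.
  by apply: fneg; rewrite yc andbT (le_lt_trans ab).
- rewrite -[_ < _]subr_gt0 Rintegral_itvB_open ?(ltW cb) ?intf //.
  apply: Rintegral_itv_gt0 => [//||y /andP[cy _]]; last exact: fpos.
  by apply: intf_oo; rewrite // ltW.
Qed.

End Rintegral_sign.

Section G_integrand.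
Context (R : realType) (ub rhob : R -> R).
Hypotheses (ub_adm : ub_admissible ub) (rhob_adm : rhob_admissible rhob).
Notation mu := (@lebesgue_measure R).

Definition G_integrand (x t eta : R) : R :=
  (x - ub eta * (t - eta)) * rhob eta * ub eta.

Lemma GE tau x t :
  G ub rhob tau x t = \int[mu]_(eta in `[0, tau]) G_integrand x t eta.
Proof. by []. Qed.

Lemma measurable_G_integrand x t :
  measurable_fun (`[0, +oo[ : set R) (G_integrand x t).
Proof.
case: ub_adm => mub _ _; case: rhob_adm => mrhob _ _.
apply: measurable_funM => //; apply: measurable_funM => //.
by apply: measurable_funB => //; apply: measurable_funM => //; exact: measurable_funB.
Qed.

Lemma integrable_G_integrand (x t tau : R) : 0 <= tau ->
  mu.-integrable `[0, tau] (EFin \o G_integrand x t).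
Proof.
move=> tau_ge0.
case: ub_adm => _ [Mu ub_le] ub_gt0; case: rhob_adm => _ /(_ tau)[Mr rhob_le] rhob_gt0.
have I_sub : (`[0, tau] : set R) `<=` `[0, +oo[.
  by move=> y /=; rewrite !in_itv /= => /andP[-> _].
apply: measurable_bounded_integrable => //.
- change (lebesgue_measure (`[0%R, tau] : set R) < +oo)%E.
  by rewrite lebesgue_measure_itv /= lte_fin; case: ifP => _; rewrite ?ltry.
- exact: measurable_funS (measurable_G_integrand x t).
have bound y : y \in `[0, tau] ->
    `|G_integrand x t y| <= (`|x| + Mu * (`|t| + tau)) * Mr * Mu.
  rewrite in_itv /= => /andP[y_ge0 y_le].
  have ub_pos := ub_gt0 y y_ge0; have rhob_pos := rhob_gt0 y y_ge0.
  rewrite /G_integrand !normrM (gtr0_norm ub_pos) (gtr0_norm rhob_pos).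
  have norm_le : `|x - ub y * (t - y)| <= `|x| + Mu * (`|t| + tau).
    rewrite (le_trans (ler_normB _ _)) // lerD2l normrM (gtr0_norm ub_pos).
    apply: ler_pM => //; [exact: ltW | exact: ub_le |].
    by rewrite (le_trans (ler_normB _ _)) // lerD2l ger0_norm.
  apply: ler_pM; [by rewrite mulr_ge0 // ltW | exact: ltW | | exact: ub_le].
  by apply: ler_pM => //; [exact: ltW | rewrite rhob_le ?y_ge0].
rewrite /bounded_near; near=> M => y /bound norm_le /=.
apply: le_trans norm_le _.
near: M; apply: nbhs_pinfty_ge; exact: num_real.
Unshelve. all: by end_near. Qed.

Lemma G_convex_comb (s x t x' t' tau : R) : 0 <= tau ->
  G ub rhob tau ((1 - s) * x + s * x') ((1 - s) * t + s * t') =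
  (1 - s) * G ub rhob tau x t + s * G ub rhob tau x' t'.
Proof.
move=> tau_ge0.
have mI : measurable (`[0, tau] : set (measurableTypeR R)) by exact: measurable_itv.
rewrite !GE -!RintegralZl ?integrable_G_integrand // -RintegralD //.
- by apply: eq_Rintegral => eta _; rewrite /G_integrand; ring.
- exact/integrableZl_EFin/integrable_G_integrand.
- exact/integrableZl_EFin/integrable_G_integrand.
Qed.

Lemma G_x0_strict_argmin (c tau : R) : 0 <= c -> 0 <= tau -> tau != c ->
  G ub rhob c 0 c < G ub rhob tau 0 c.
Proof.
move=> c_ge0 tau_ge0 tau_neq; rewrite !GE.
have G_integrandE y : G_integrand 0 c y = (y - c) * (rhob y * ub y ^+ 2).
  by rewrite /G_integrand; ring.
have weight_gt0 y : 0 <= y -> 0 < rhob y * ub y ^+ 2.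
  case: ub_adm rhob_adm => _ _ ub_gt0 [_ _ rhob_gt0] y_ge0.
  by rewrite mulr_gt0 ?exprn_gt0 ?ub_gt0 ?rhob_gt0.
apply: Rintegral_sign_change_argmin => // [b b_ge0|y /andP[y_gt0 y_lt]|y y_gt].
- exact: integrable_G_integrand.
- by rewrite G_integrandE pmulr_llt0 ?subr_lt0 // weight_gt0 // ltW.
- rewrite G_integrandE pmulr_lgt0 ?subr_gt0 // weight_gt0 //.
  by rewrite (le_trans c_ge0) // ltW.
Qed.

End G_integrand.

Lemma convex_comb_strict_argmin (R : realFieldType) (T : Type) (D : set T)
    (g h : T -> R) (s : R) (c : T) :
  0 < s <= 1 -> (forall y, D y -> g c <= g y) ->
  (forall y, D y -> y <> c -> h c < h y) ->
  forall y, D y -> y <> c -> (1 - s) * g c + s * h c < (1 - s) * g y + s * h y.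
Proof.
move=> /andP[s_gt0 s_le1] g_min h_argmin y Dy y_neq.
rewrite ler_ltD // ?ler_wpM2l ?subr_ge0 ?g_min // ltr_pM2l //.
exact: h_argmin.
Qed.

Theorem lemma2p4 (R : realType) (ub rhob : R -> R) (x t tau1 xb tb s : R) :
  ub_admissible ub -> rhob_admissible rhob ->
  0 < x -> 0 < t ->
  is_minimizer ub rhob x t tau1 ->
  0 <= s <= 1 ->
  xb = (1 - s) * x + s * 0 ->
  tb = (1 - s) * t + s * tau1 ->
  (xb, tb) <> (x, t) ->
  is_minimizer ub rhob xb tb tau1 /\
  (forall tau : R, is_minimizer ub rhob xb tb tau -> tau = tau1).
Proof.
move=> ub_adm rhob_adm _ _ [tau1_ge0 tau1_min] /andP[s_ge0 s_le1] xbE tbE moved.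
have s_gt0 : 0 < s.
  rewrite lt_def s_ge0 andbT; apply/eqP => s0; apply: moved.
  by rewrite xbE tbE s0 subr0 !mul1r !mul0r !addr0.
have G_split tau : 0 <= tau ->
    G ub rhob tau xb tb = (1 - s) * G ub rhob tau x t + s * G ub rhob tau 0 tau1.
  by move=> tau_ge0; rewrite xbE tbE G_convex_comb.
have G_argmin tau : 0 <= tau -> tau != tau1 ->
    G ub rhob tau1 xb tb < G ub rhob tau xb tb.
  move=> tau_ge0 /eqP tau_neq; rewrite !G_split //.
  apply: (@convex_comb_strict_argmin _ _ [set tau : R | 0 <= tau]
    (fun tau => G ub rhob tau x t) (fun tau => G ub rhob tau 0 tau1) s tau1);
    rewrite ?s_gt0 // => y y_ge0 /eqP; exact: G_x0_strict_argmin.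
split; first split => // tau tau_ge0.
- by have [->|/(G_argmin _ tau_ge0)/ltW] := eqVneq tau tau1.
- move=> tau [tau_ge0 tau_min]; apply/eqP/negPn/negP => /(G_argmin _ tau_ge0).
  by rewrite ltNge tau_min.
Qed.
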